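(* Let $n$ be even. Any quantum query algorithm that, given oracle access to $O_P$ for an arbitrary fixed-point-free involution $\sigma$ on $[n]$, outputs the single-bit descriptor of $\sigma$ with probability at least $\frac23$ must make $\Omega(n^{3/2})$ queries in the worst case.
   Context: A permutation $\sigma$ on $[n]$ is represented by its $n\times n$ permutation matrix $P$ with $P_{i,j}=1$ iff $\sigma(i)=j$, accessible only through the unitary $O_P:\lvert i,j,b\rangle\mapsto\lvert i,j,b\oplus P_{i,j}\rangle$. The single-bit descriptor of $\sigma$ is the string $z\in\{0,1\}^n$ with $z_i=\sigma(i)\bmod 2$. A fixed-point-free involution is a permutation $\sigma$ with $\sigma(\sigma(i))=i$ and $\sigma(i)\ne i$ for all $i$ (the $\mathsf{Descriptor}$ problem is computing the single-bit descriptor of such $\sigma$). *)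

From mathcomp Require Import all_boot all_order all_algebra all_fingroup.
From mathcomp Require Import complex Rstruct.
Set Implicit Arguments. Unset Strict Implicit. Unset Printing Implicit Defensive.
Import Order.TTheory GRing.Theory Num.Theory.
Local Open Scope ring_scope.

Definition RR : rcfType := Rdefinitions.R.
Definition CC : numClosedFieldType := RR[i].

Definition fpf_involution (n : nat) (s : 'S_n) : Prop :=
  forall i : 'I_n, s (s i) = i /\ s i <> i.

(* Permutation matrix entry P_{i,j} = 1 iff sigma(i) = j. *)
Definition perm_entry (n : nat) (s : 'S_n) (i j : 'I_n) : bool := s i == j.

(* Single-bit descriptor z_i = sigma(i) mod 2 (indices 0-based: [n] = {0,..,n-1}). *)
Definition descriptor (n : nat) (s : 'S_n) : {ffun 'I_n -> bool} :=
  [ffun i => odd (s i)].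

(* Computational basis of the algorithm's Hilbert space:
   query register |i, j, b> together with an m-dimensional workspace. *)
Definition basis (n m : nat) : finType := ('I_n * 'I_n * bool * 'I_m)%type.

Definition state (X : finType) := X -> CC.
Definition op (X : finType) := X -> X -> CC.

Definition apply_op (X : finType) (U : op X) (v : state X) : state X :=
  fun x => \sum_(y : X) U x y * v y.

Definition unitary (X : finType) (U : op X) : Prop :=
  (forall x y : X, \sum_(z : X) (U z x)^* * U z y = (x == y)%:R) /\
  (forall x y : X, \sum_(z : X) U x z * (U y z)^* = (x == y)%:R).

Definition normalized (X : finType) (v : state X) : Prop :=
  \sum_(x : X) `|v x| ^+ 2 = 1.

(* The oracle O_P : |i,j,b> |w> |-> |i,j,b xor P_{ij}> |w>, acting on a state. *)
Definition oracle (n m : nat) (s : 'S_n) (v : state (basis n m)) : state (basis n m) :=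
  fun x => let: (i, j, b, w) := x in v (i, j, b (+) perm_entry s i j, w).

Fixpoint run (X : finType) (U : nat -> op X) (O : state X -> state X)
    (k : nat) (psi0 : state X) : state X :=
  match k with
  | 0 => apply_op (U 0%N) psi0
  | k'.+1 => apply_op (U k) (O (run U O k' psi0))
  end.

Definition success_prob (n m : nat) (T : nat) (U : nat -> op (basis n m))
    (psi0 : state (basis n m)) (out : basis n m -> {ffun 'I_n -> bool})
    (s : 'S_n) : CC :=
  \sum_(x : basis n m | out x == descriptor s) `|run U (@oracle n m s) T psi0 x| ^+ 2.

(* Proof idea (weighted adversary method).  Call a fixed-point-free involution
   s related to s' = (b c) s (b c) when b and c have different parities and
   s b <> c; then s' is again a fixed-point-free involution and its descriptor
   differs from that of s at s b.  The progress measure W_k, the sum over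
   related pairs of |<psi_s^k, psi_s'^k>|, equals the number of related pairs
   before any query and at most 17/18 of it after T queries if the algorithm
   succeeds with probability 2/3.  A query changes the overlap of s and s' only
   through the entries where their matrices differ, and by AM-GM with weight
   1/sqrt n on the ones of s and sqrt n on its zeros the drop is bounded by
   weighted masses of psi_s^k and psi_s'^k.  A one-entry of s is changed by at
   most 4n swaps and a zero-entry by at most 4, so one query lowers W by at most
   8 sqrt n per involution, while every involution has at least n^2/2 - n
   partners; hence T >= (n^2/2 - n) / (144 sqrt n). *)

From mathcomp Require Import all_boot all_order all_algebra all_fingroup.
From mathcomp Require Import complex Rstruct.
From mathcomp Require Import ring lra zify.
Set Implicit Arguments. Unset Strict Implicit. Unset Printing Implicit Defensive.
Import Order.TTheory GRing.Theory Num.Theory Normc.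
Local Open Scope ring_scope.

Lemma weighted_amgm (R : realFieldType) (t x y : R) :
  0 < t -> x * y <= (t * x ^+ 2 + y ^+ 2 / t) / 2.
Proof.
move=> t_gt0; rewrite -subr_ge0.
have -> : (t * x ^+ 2 + y ^+ 2 / t) / 2 - x * y = t * (x - y / t) ^+ 2 / 2.
  field; exact: lt0r_neq0.
by apply: divr_ge0 => //; apply: mulr_ge0; [exact: ltW | exact: sqr_ge0].
Qed.

Lemma ler_sum_subset (R : numDomainType) (I : finType) (P Q : pred I) (F : I -> R) :
  (forall i, P i -> Q i) -> (forall i, 0 <= F i) ->
  \sum_(i | P i) F i <= \sum_(i | Q i) F i.
Proof.
move=> PQ F_ge0; rewrite [X in X <= _]big_mkcond [X in _ <= X]big_mkcond.
by apply: ler_sum => i _; case: ifP => [/PQ ->|_] //; case: ifP.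
Qed.

Lemma natr_half (R : numFieldType) n : ~~ odd n -> n./2%:R = n%:R / 2 :> R.
Proof.
move=> n_even; rewrite -[in RHS](odd_double_half n) (negPf n_even) add0n.
by rewrite -muln2 natrM mulfK // pnatr_eq0.
Qed.

Lemma normr_normc (z : CC) : `|z| = (normc z)%:C%C.
Proof. by case: z. Qed.

Lemma normc_ge0 (z : CC) : 0 <= normc z.
Proof. by case: z => a b; exact: sqrtr_ge0. Qed.

Lemma normc_conj (z : CC) : normc z^* = normc z.
Proof. by case: z => a b; rewrite /= sqrrN. Qed.

(* [normc] is the norm of the normed module [Rcomplex RR]. *)
Lemma normc_sum (I : finType) (P : pred I) (F : I -> CC) :
  normc (\sum_(i | P i) F i) <= \sum_(i | P i) normc (F i).
Proof. exact: (@ler_norm_sum _ (Rcomplex RR)). Qed.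

Lemma normc_mul (x y : CC) : normc (x * y) = normc x * normc y.
Proof. exact: normcM. Qed.

Lemma lerB_normc (x y : CC) : normc x - normc y <= normc (y - x).
Proof. by rewrite -[normc (y - x)]normcN opprB; exact: (@lerB_dist _ (Rcomplex RR)). Qed.

Lemma sum_normr_sqr (X : finType) (P : pred X) (a : state X) :
  \sum_(x | P x) `|a x| ^+ 2 = (\sum_(x | P x) normc (a x) ^+ 2)%:C%C.
Proof. by rewrite rmorph_sum; apply: eq_bigr => x _; rewrite normr_normc rmorphXn. Qed.

Section InnerProduct.
Variable X : finType.
Implicit Types (a b : state X) (U : op X).

Definition dotp a b : CC := \sum_x (a x)^* * b x.

Lemma dotp_unitary U a b : unitary U -> dotp (apply_op U a) (apply_op U b) = dotp a b.
Proof.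
case=> U_isometry _; rewrite /dotp /apply_op.
under eq_bigr => x _ do rewrite rmorph_sum big_distrlr /=.
rewrite exchange_big; apply: eq_bigr => y _ /=; rewrite exchange_big /=.
have unit_col z : \sum_x (U x y * a y)^* * (U x z * b z) = (y == z)%:R * ((a y)^* * b z).
  rewrite -U_isometry mulr_suml; apply: eq_bigr => x _; rewrite rmorphM /=; ring.
under eq_bigr => z _ do rewrite unit_col.
by rewrite (bigD1 y) //= eqxx mul1r big1 ?addr0 // => z; rewrite eq_sym => /negPf ->; rewrite mul0r.
Qed.

Lemma dotp_self a : dotp a a = \sum_x `|a x| ^+ 2.
Proof. by apply: eq_bigr => x _; rewrite -normCKC. Qed.

Lemma normalized_normc a :
  normalized a -> \sum_x normc (a x) ^+ 2 = 1.
Proof. by rewrite /normalized sum_normr_sqr => /(congr1 (@complex.Re RR)). Qed.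

Lemma normc_dotp_le a b : normc (dotp a b) <= \sum_x normc (a x) * normc (b x).
Proof.
rewrite /dotp; apply: (le_trans (normc_sum xpredT _)).
by under eq_bigr => x _ do rewrite normc_mul normc_conj.
Qed.

Lemma sum_weighted_amgm (P : pred X) (f g : X -> RR) (t : RR) : 0 < t ->
  \sum_(x | P x) f x * g x <=
  (t * \sum_(x | P x) f x ^+ 2 + (\sum_(x | P x) g x ^+ 2) / t) / 2.
Proof.
move=> t_gt0; rewrite mulr_sumr mulr_suml -big_split mulr_suml /=.
by apply: ler_sum => x _; exact: weighted_amgm.
Qed.

Lemma normc_dotp_separated (P : pred X) a b :
  \sum_x normc (a x) ^+ 2 = 1 -> \sum_x normc (b x) ^+ 2 = 1 ->
  2 / 3 <= \sum_(x | P x) normc (a x) ^+ 2 ->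
  2 / 3 <= \sum_(x | ~~ P x) normc (b x) ^+ 2 ->
  normc (dotp a b) <= 17 / 18.
Proof.
move=> a1 b1 aP bNP; rewrite (bigID P) /= in a1; rewrite (bigID P) /= in b1.
(* AM-GM with weight 3/4 where [a] concentrates and 4/3 on the complement. *)
have t34 : 0 < 3 / 4 :> RR by lra.
have t43 : 0 < 4 / 3 :> RR by lra.
have := normc_dotp_le a b; rewrite (bigID P) /=.
have := sum_weighted_amgm P (fun x => normc (a x)) (fun x => normc (b x)) t34.
have := sum_weighted_amgm (predC P) (fun x => normc (a x)) (fun x => normc (b x)) t43.
rewrite /=; lra.
Qed.

End InnerProduct.

Section Oracle.
Variables n m : nat.
Implicit Types (s : 'S_n) (a b : state (basis n m)) (x : basis n m).

Definition qi x : 'I_n := x.1.1.1.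
Definition qj x : 'I_n := x.1.1.2.
Definition query_entry s x : bool := perm_entry s (qi x) (qj x).
Definition query_flip s x : basis n m :=
  let: (i, j, c, w) := x in (i, j, c (+) perm_entry s i j, w).

Lemma oracleE s a x : oracle s a x = a (query_flip s x).
Proof. by case: x => [[[i j] c] w]. Qed.

Lemma query_flipK s : involutive (query_flip s).
Proof. by case=> [[[i j] c] w] /=; rewrite addbK. Qed.

Lemma qi_flip s x : qi (query_flip s x) = qi x.
Proof. by case: x => [[[i j] c] w]. Qed.

Lemma qj_flip s x : qj (query_flip s x) = qj x.
Proof. by case: x => [[[i j] c] w]. Qed.

Lemma query_flip_eq s s' x :
  query_entry s x = query_entry s' x -> query_flip s x = query_flip s' x.
Proof. by case: x => [[[i j] c] w]; rewrite /query_entry /= => ->. Qed.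

Lemma dotp_oracle s a b : dotp (oracle s a) (oracle s b) = dotp a b.
Proof.
rewrite /dotp [RHS](reindex_inj (inv_inj (query_flipK s))) /=.
by apply: eq_bigr => x _; rewrite !oracleE.
Qed.

Lemma sum_query_flip s s' s0 (f : basis n m -> RR) :
  \sum_(x | query_entry s x != query_entry s' x) f (query_flip s0 x) =
  \sum_(x | query_entry s x != query_entry s' x) f x.
Proof.
rewrite [RHS](reindex_inj (inv_inj (query_flipK s0))) /=.
by apply: eq_bigl => x; rewrite /query_entry qi_flip qj_flip.
Qed.

Lemma dotp_oracleB s s' a b :
  dotp (oracle s a) (oracle s' b) - dotp a b =
  \sum_(x | query_entry s x != query_entry s' x)
    (a (query_flip s x))^* * (b (query_flip s' x) - b (query_flip s x)).
Proof.
rewrite /dotp [X in _ - X](reindex_inj (inv_inj (query_flipK s))) /= -sumrB.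
rewrite (bigID (fun x => query_entry s x != query_entry s' x)) /=.
rewrite [X in _ + X]big1 ?addr0 => [|x /negPn /eqP same].
  by apply: eq_bigr => x _; rewrite !oracleE mulrBr.
by rewrite !oracleE (query_flip_eq same) subrr.
Qed.

Lemma normc_dotp_oracleB s s' (w : 'I_n -> 'I_n -> RR) a b :
  (forall i j, 0 < w i j) ->
  normc (dotp (oracle s a) (oracle s' b) - dotp a b) <=
  \sum_(x | query_entry s x != query_entry s' x)
    (w (qi x) (qj x) * normc (a x) ^+ 2 + normc (b x) ^+ 2 / w (qi x) (qj x)).
Proof.
move=> w_gt0; pose wt x := w (qi x) (qj x).
have wt_flip s0 x : wt (query_flip s0 x) = wt x by rewrite /wt qi_flip qj_flip.
(* Bound each term by the triangle inequality and AM-GM with weight [wt x];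
   the flips fix the query position, so reindexing by them collects the sums. *)
pose A x := wt x * normc (a x) ^+ 2 / 2.
pose B x := normc (b x) ^+ 2 / wt x / 2.
rewrite dotp_oracleB.
apply: (le_trans (normc_sum (fun x => query_entry s x != query_entry s' x) _)).
apply: (@le_trans _ _ (\sum_(x | query_entry s x != query_entry s' x)
  (A (query_flip s x) + B (query_flip s' x) + (A (query_flip s x) + B (query_flip s x))))).
  apply: ler_sum => x _; rewrite normc_mul normc_conj /A /B !wt_flip.
  set a1 := a (query_flip s x); set b1 := b (query_flip s' x); set b2 := b (query_flip s x).
  have tri : normc (b1 - b2) <= normc b1 + normc b2 by rewrite -(normcN b2) le_normcD.
  have := ler_wpM2l (normc_ge0 a1) tri.
  have := weighted_amgm (normc a1) (normc b1) (w_gt0 (qi x) (qj x)).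
  have := weighted_amgm (normc a1) (normc b2) (w_gt0 (qi x) (qj x)).
  rewrite -/(wt x); lra.
rewrite !big_split /= !sum_query_flip -!big_split /=.
by apply: ler_sum => x _; rewrite /A /B /wt; lra.
Qed.

End Oracle.

Local Close Scope ring_scope.

Lemma sum_odd_eq k (c : bool) : \sum_(i < k.*2) (odd i == c : nat) = k.
Proof.
elim: k => [|k IHk]; first by rewrite big_ord0.
by rewrite doubleS !big_ord_recr /= {}IHk odd_double; case: c; rewrite ?addn0 ?addn1.
Qed.

Lemma sum_eq1 (I : finType) (a : I) : \sum_(i : I) (i == a : nat) = 1.
Proof. by rewrite (bigD1 a) //= eqxx big1 // => i /negPf ->. Qed.

Section SwapConjugation.
Variable n : nat.
Implicit Types (s : 'S_n) (p : 'I_n * 'I_n) (i j : 'I_n).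

Definition fpf_involutionb s : bool := [forall i, (s (s i) == i) && (s i != i)].

Lemma fpf_involutionP s : reflect (fpf_involution s) (fpf_involutionb s).
Proof.
apply: (iffP forallP) => fpf i; first by case/andP: (fpf i) => /eqP -> /eqP.
by case: (fpf i) => -> /eqP ->; rewrite eqxx.
Qed.

Lemma fpf_involution_exists : ~~ odd n -> 0 < n -> exists s, fpf_involutionb s.
Proof.
move=> n_even n_gt0; pose k := n./2.
have n_2k : n = k * 2 by rewrite muln2 -[LHS]odd_double_half (negPf n_even).
pose f i : 'I_n := Ordinal (ltn_pmod (i + k) n_gt0).
have fK : involutive f.
  move=> i; apply: val_inj => /=.
  by rewrite modnDml -addnA addnn -mul2n mulnC -n_2k modnDr modn_small.
have f_neq i : f i != i.
  apply/eqP => /(congr1 val) /= /eqP.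
  rewrite -{2}(modn_small (ltn_ord i)) -{2}(addn0 i) eqn_modDl mod0n modn_small; lia.
exists (perm (can_inj fK)); apply/forallP => i.
by rewrite !permE fK eqxx f_neq.
Qed.

Definition tconj p s : 'S_n := (s ^ tperm p.1 p.2)%g.

Lemma tconjE p s i : tconj p s i = tperm p.1 p.2 (s (tperm p.1 p.2 i)).
Proof. by rewrite /tconj conjgE tpermV !permM. Qed.

Lemma tconjK p : involutive (tconj p).
Proof. by move=> s; apply/permP => i; rewrite !tconjE !tpermK. Qed.

Lemma fpf_involutionb_tconj p s : fpf_involutionb (tconj p s) = fpf_involutionb s.
Proof.
suff fpfJ s' : fpf_involutionb s' -> fpf_involutionb (tconj p s').
  by apply/idP/idP => /fpfJ //; rewrite tconjK.
move/fpf_involutionP => fpf; apply/fpf_involutionP => i; rewrite !tconjE tpermK.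
have [ss neq] := fpf (tperm p.1 p.2 i).
by split=> [|/(congr1 (tperm p.1 p.2))]; rewrite ?ss tpermK.
Qed.

Definition good_swap s p : bool := (odd p.1 != odd p.2) && (s p.1 != p.2).

Lemma good_swap_tconj p s : fpf_involution s -> good_swap (tconj p s) p = good_swap s p.
Proof.
case: p => b c fpf; rewrite /good_swap tconjE /= tpermL; congr (_ && _).
have [sbb _] := fpf b; have [scc _] := fpf c.
apply/idP/idP; apply: contra => /eqP E.
  by rewrite -E sbb tpermL.
by move/(congr1 (tperm b c)): E; rewrite tpermK tpermR => <-; rewrite scc.
Qed.

Lemma descriptor_tconj p s :
  fpf_involution s -> good_swap s p -> descriptor (tconj p s) != descriptor s.
Proof.
case: p => b c fpf /andP [/= odd_bc sb_c].
apply/eqP => /ffunP /(_ (s b)); rewrite !ffunE tconjE /=.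
have [sbb sb_b] := fpf b.
have b_sb : b != s b by rewrite eq_sym; apply/eqP.
have c_sb : c != s b by rewrite eq_sym.
by rewrite (tpermD b_sb c_sb) sbb tpermL => odd_cb; move: odd_bc; rewrite odd_cb eqxx.
Qed.

Lemma sum_fst_eq i : \sum_(p : 'I_n * 'I_n) (p.1 == i : nat) = n.
Proof.
rewrite -(pair_big xpredT xpredT (fun b c : 'I_n => (b == i : nat))) /=.
by under eq_bigr => b _ do rewrite sum_nat_const card_ord; rewrite -big_distrr /= sum_eq1 muln1.
Qed.

Lemma sum_snd_eq i : \sum_(p : 'I_n * 'I_n) (p.2 == i : nat) = n.
Proof.
rewrite -(pair_big xpredT xpredT (fun b c : 'I_n => (c == i : nat))) /=.
by under eq_bigr => b _ do rewrite sum_eq1; rewrite sum1_card card_ord.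
Qed.

Lemma tconj_new_entry s b c i j : fpf_involution s -> s i != j -> tconj (b, c) s i = j ->
  [|| (b, c) == (i, s j), (b, c) == (s j, i), (b, c) == (j, s i) | (b, c) == (s i, j)].
Proof.
move=> fpf sij; rewrite tconjE /= => /(congr1 (tperm b c)); rewrite tpermK.
have ss x : s (s x) = x by case: (fpf x).
have sx x : s x <> x by case: (fpf x).
case: (tpermP b c i) => [ib|ic|bi ci]; case: (tpermP b c j) => [jb|jc|bj cj] E.
- by case: (sx c).
- by move: sij; rewrite ib jc -E ss eqxx.
- by apply/or4P; apply: Or41; rewrite ib -E ss.
- by move: sij; rewrite ic jb -E ss eqxx.
- by case: (sx b).
- by apply/or4P; apply: Or42; rewrite ic -E ss.
- by apply/or4P; apply: Or43; rewrite jb E.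
- by apply/or4P; apply: Or44; rewrite jc E.
- by move: sij; rewrite E eqxx.
Qed.

Lemma count_entry_changes s i j : fpf_involution s ->
  \sum_(p | perm_entry s i j != perm_entry (tconj p s) i j) 1 <=
  if perm_entry s i j then 4 * n else 4.
Proof.
move=> fpf; rewrite /perm_entry; have [sij | sij] := eqVneq (s i) j.
  apply: (@leq_trans (\sum_p ((p.1 == i) + (p.1 == j) + (p.2 == i) + (p.2 == j)))).
    rewrite big_mkcond /=; apply: leq_sum => p _; case: ifP => // changed.
    rewrite !addn_gt0 !lt0b; apply: contraLR changed.
    rewrite !negb_or => /andP [/andP [/andP [p1i p1j] p2i] p2j].
    by rewrite tconjE (tpermD p1i p2i) sij (tpermD p1j p2j) eqxx.
  by rewrite !big_split /= !sum_fst_eq !sum_snd_eq; lia.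
apply: (@leq_trans (\sum_p
   ((p == (i, s j)) + (p == (s j, i)) + (p == (j, s i)) + (p == (s i, j))))).
  rewrite big_mkcond /=; apply: leq_sum => [[b c]] _; case: ifP => // /eqP hit.
  by rewrite !addn_gt0 !lt0b -!orbA tconj_new_entry //; apply/eqP; case: eqP hit.
by rewrite !big_split /= !sum_eq1.
Qed.

Lemma good_swap_count s : ~~ odd n -> n * n./2 - n <= \sum_(p | good_swap s p) 1.
Proof.
move=> n_even.
have parity_bound : \sum_(p : 'I_n * 'I_n) (odd p.1 != odd p.2 : nat) <=
    \sum_(p | good_swap s p) 1 + \sum_(p : 'I_n * 'I_n) (s p.1 == p.2 : nat).
  rewrite [X in _ <= X + _]big_mkcond -big_split; apply: leq_sum => p _ /=.
  by rewrite /good_swap; case: (odd p.1 != odd p.2); case: (s p.1 == p.2).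
have graph_size : \sum_(p : 'I_n * 'I_n) (s p.1 == p.2 : nat) = n.
  rewrite -(pair_big xpredT xpredT (fun b c : 'I_n => (s b == c : nat))) /=.
  under eq_bigr => b _ do under eq_bigr => c _ do rewrite eq_sym.
  by under eq_bigr => b _ do rewrite sum_eq1; rewrite sum1_card card_ord.
have parity_size : \sum_(p : 'I_n * 'I_n) (odd p.1 != odd p.2 : nat) = n * n./2.
  rewrite -(pair_big xpredT xpredT (fun b c : 'I_n => (odd b != odd c : nat))) /=.
  have n_2k : n = (n./2).*2 by rewrite -[LHS]odd_double_half (negPf n_even).
  transitivity (\sum_(b < n) n./2); last by rewrite sum_nat_const card_ord.
  apply: eq_bigr => b _; have := sum_odd_eq n./2 (~~ odd b); rewrite -n_2k => <-.
  by apply: eq_bigr => c _; case: (odd b); case: (odd c).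
lia.
Qed.

Lemma sum_good_swap_sym (V : nmodType) (F : 'S_n -> 'S_n -> V) :
  (\sum_(s | fpf_involutionb s) \sum_(p | good_swap s p) F s (tconj p s) =
   \sum_(s | fpf_involutionb s) \sum_(p | good_swap s p) F (tconj p s) s)%R.
Proof.
rewrite !pair_big_dep /=.
pose flip (sp : 'S_n * ('I_n * 'I_n)) := (tconj sp.2 sp.1, sp.2).
have flipK : involutive flip by case=> s p; rewrite /flip /= tconjK.
rewrite (reindex_inj (inv_inj flipK)) /=.
apply: eq_big => [[s p]|[s p] _] /=; last by rewrite tconjK.
rewrite fpf_involutionb_tconj; case/boolP: (fpf_involutionb s) => //= /fpf_involutionP.
exact: good_swap_tconj.
Qed.

End SwapConjugation.

Local Open Scope ring_scope.

Section Adversary.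
Variables n m T : nat.
Variable U : nat -> op (basis n m).
Variable psi0 : state (basis n m).
Variable out : basis n m -> {ffun 'I_n -> bool}.
Hypothesis U_unitary : forall k, (k <= T)%N -> unitary (U k).
Hypothesis psi0_normalized : normalized psi0.
Hypothesis n_gt0 : (0 < n)%N.
Implicit Types (s : 'S_n) (x : basis n m).

Definition psi s k := run U (@oracle n m s) k psi0.

Lemma psiS s k : psi s k.+1 = apply_op (U k.+1) (oracle s (psi s k)).
Proof. by []. Qed.

Lemma psi_normalized s k : (k <= T)%N -> normalized (psi s k).
Proof.
rewrite /normalized -dotp_self; elim: k => [|k IHk] k_le.
  by rewrite dotp_unitary ?dotp_self //; apply: U_unitary.
by rewrite psiS dotp_unitary ?dotp_oracle ?IHk 1?ltnW //; apply: U_unitary.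
Qed.

Local Notation sqrtn := (Num.sqrt (n%:R : RR)).

Lemma sqrtn_gt0 : 0 < sqrtn.
Proof. by rewrite sqrtr_gt0 ltr0n. Qed.

Definition adv_weight s (i j : 'I_n) : RR :=
  if perm_entry s i j then sqrtn^-1 else sqrtn.

Lemma adv_weight_gt0 s i j : 0 < adv_weight s i j.
Proof. by rewrite /adv_weight; case: ifP; rewrite ?invr_gt0 sqrtn_gt0. Qed.

Lemma adv_weightV s s' i j :
  perm_entry s i j != perm_entry s' i j -> (adv_weight s i j)^-1 = adv_weight s' i j.
Proof. by rewrite /adv_weight; case: perm_entry; case: perm_entry; rewrite ?invrK. Qed.

Lemma adv_weight_changes s i j : fpf_involution s ->
  adv_weight s i j * (\sum_(p | perm_entry s i j != perm_entry (tconj p s) i j) 1)%:R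
  <= 4 * sqrtn.
Proof.
move=> fpf; have := count_entry_changes i j fpf; rewrite -(ler_nat RR) /adv_weight.
have sqrtnK : sqrtn ^+ 2 = n%:R by rewrite sqr_sqrtr ?ler0n.
have sqrtn_neq0 : sqrtn != 0 by rewrite gt_eqF ?sqrtn_gt0.
case: perm_entry => count_le.
  apply: le_trans (ler_wpM2l (ltW _) count_le) _; first by rewrite invr_gt0 sqrtn_gt0.
  suff -> : sqrtn^-1 * (4 * n)%:R = 4 * sqrtn by [].
  by rewrite natrM; set r := sqrtn in sqrtnK sqrtn_neq0 *; rewrite -sqrtnK; field.
by rewrite mulrC ler_wpM2r ?(ltW sqrtn_gt0).
Qed.

Lemma progress_step s s' k : (k < T)%N ->
  normc (dotp (psi s k) (psi s' k)) - normc (dotp (psi s k.+1) (psi s' k.+1)) <=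
  \sum_(x | query_entry s x != query_entry s' x)
    (adv_weight s (qi x) (qj x) * normc (psi s k x) ^+ 2 +
     adv_weight s' (qi x) (qj x) * normc (psi s' k x) ^+ 2).
Proof.
move=> k_lt; rewrite !psiS dotp_unitary; last exact: U_unitary.
apply: le_trans (lerB_normc _ _) _.
apply: le_trans (normc_dotp_oracleB _ _ _ _ (@adv_weight_gt0 s)) _.
by apply: ler_sum => x differ; rewrite lerD2l mulrC (adv_weightV differ).
Qed.

Hypothesis success : forall s, fpf_involution s ->
  2%:R / 3%:R <= success_prob T U psi0 out s.

Lemma success_normc s : fpf_involution s ->
  2 / 3 <= \sum_(x | out x == descriptor s) normc (psi s T x) ^+ 2.
Proof.
move/success; rewrite /success_prob sum_normr_sqr.
have -> : 2%:R / 3%:R = (2 / 3 : RR)%:C%C by rewrite fmorph_div /= !rmorph_nat.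
by rewrite lecR.
Qed.

Lemma final_overlap_le s p : fpf_involution s -> good_swap s p ->
  normc (dotp (psi s T) (psi (tconj p s) T)) <= 17 / 18.
Proof.
move=> fpf good; have fpf' : fpf_involution (tconj p s).
  by apply/fpf_involutionP; rewrite fpf_involutionb_tconj; apply/fpf_involutionP.
apply: (normc_dotp_separated (P := fun x => out x == descriptor s)).
- exact/normalized_normc/psi_normalized.
- exact/normalized_normc/psi_normalized.
- exact: success_normc.
apply: le_trans (success_normc fpf') _; apply: ler_sum_subset => [x /eqP ->|x].
  exact: descriptor_tconj.
exact: sqr_ge0.
Qed.

Definition progress k : RR :=
  \sum_(s | fpf_involutionb s) \sum_(p | good_swap s p)
    normc (dotp (psi s k) (psi (tconj p s) k)).

Definition adv_rel_size : RR :=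
  \sum_(s : 'S_n | fpf_involutionb s) \sum_(p | good_swap s p) 1.

Definition fpf_count : RR := \sum_(s : 'S_n | fpf_involutionb s) 1.

Lemma progress0 : progress 0 = adv_rel_size.
Proof.
apply: eq_bigr => s _; apply: eq_bigr => p _.
rewrite dotp_unitary ?dotp_self ?psi0_normalized; [exact: normc1 | exact: U_unitary].
Qed.

Lemma progressT : progress T <= 17 / 18 * adv_rel_size.
Proof.
rewrite mulr_sumr; apply: ler_sum => s /fpf_involutionP fpf.
by rewrite mulr_sumr; apply: ler_sum => p good; rewrite mulr1 final_overlap_le.
Qed.

Lemma sum_weighted_changes_le s k : fpf_involution s -> (k <= T)%N ->
  \sum_(p | good_swap s p) \sum_(x | query_entry s x != query_entry (tconj p s) x)
    adv_weight s (qi x) (qj x) * normc (psi s k x) ^+ 2 <= 4 * sqrtn.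
Proof.
move=> fpf k_le.
pose g x := adv_weight s (qi x) (qj x) * normc (psi s k x) ^+ 2.
apply: (@le_trans _ _ (\sum_p \sum_(x | query_entry s x != query_entry (tconj p s) x) g x)).
  apply: ler_sum_subset => // p; apply: sumr_ge0 => x _.
  by rewrite mulr_ge0 ?sqr_ge0 ?ltW ?adv_weight_gt0.
rewrite (exchange_big_dep xpredT) //=.
apply: (@le_trans _ _ (\sum_x 4 * sqrtn * normc (psi s k x) ^+ 2)); last first.
  by rewrite -mulr_sumr (normalized_normc (psi_normalized s k_le)) mulr1.
apply: ler_sum => x _.
have -> : \sum_(p | query_entry s x != query_entry (tconj p s) x) g x =
    g x * (\sum_(p | query_entry s x != query_entry (tconj p s) x) 1)%N%:R.
  by rewrite natr_sum mulr_sumr; apply: eq_bigr => p _; rewrite mulr1.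
by rewrite /g mulrAC ler_wpM2r ?sqr_ge0 ?adv_weight_changes.
Qed.

Lemma progress_drop k : (k < T)%N -> progress k - progress k.+1 <= 8 * sqrtn * fpf_count.
Proof.
move=> k_lt.
pose D u v := \sum_(x | query_entry u x != query_entry v x)
  adv_weight u (qi x) (qj x) * normc (psi u k x) ^+ 2.
apply: (@le_trans _ _ (\sum_(s | fpf_involutionb s) \sum_(p | good_swap s p)
    (D s (tconj p s) + D (tconj p s) s))).
  rewrite -sumrB; apply: ler_sum => s _; rewrite -sumrB; apply: ler_sum => p _.
  apply: le_trans (progress_step _ _ k_lt) _; rewrite big_split lerD2l.
  by rewrite /D; under eq_bigl => x do rewrite eq_sym.
(* (s, p) |-> (tconj p s, p) permutes the related pairs, so the partner-weighted
   half of the drop equals the s-weighted half. *)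
under eq_bigr => s _ do rewrite big_split.
rewrite big_split /=.
have /= -> := sum_good_swap_sym (fun u v => D v u).
have per_s : \sum_(s | fpf_involutionb s) \sum_(p | good_swap s p) D s (tconj p s)
    <= 4 * sqrtn * fpf_count.
  rewrite mulr_sumr; apply: ler_sum => s /fpf_involutionP fpf.
  by rewrite mulr1 sum_weighted_changes_le // ltnW.
lra.
Qed.

Lemma progress_total_drop k : (k <= T)%N ->
  progress 0 - progress k <= k%:R * (8 * sqrtn * fpf_count).
Proof.
elim: k => [|k IHk] k_le; first by rewrite subrr mul0r.
have := IHk (ltnW k_le); have := progress_drop k_le.
rewrite -natr1 mulrDl mul1r; lra.
Qed.

Lemma adv_rel_size_ge : ~~ odd n -> (n * n./2 - n)%:R * fpf_count <= adv_rel_size.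
Proof.
move=> n_even; rewrite mulr_sumr; apply: ler_sum => s _.
have -> : \sum_(p | good_swap s p) (1 : RR) = (\sum_(p | good_swap s p) 1)%N%:R.
  by rewrite natr_sum.
by rewrite mulr1 ler_nat good_swap_count.
Qed.

Lemma fpf_count_ge1 : ~~ odd n -> 1 <= fpf_count.
Proof.
move=> n_even; have [s0 fpf0] := fpf_involution_exists n_even n_gt0.
by rewrite /fpf_count (bigD1 s0) //= lerDl sumr_ge0 // => s _; exact: ler01.
Qed.

Lemma adversary_bound : ~~ odd n -> (n * n./2 - n)%:R / 18 <= T%:R * (8 * sqrtn).
Proof.
move=> n_even; have F_gt0 : 0 < fpf_count by apply: lt_le_trans (fpf_count_ge1 n_even).
rewrite -(ler_pM2r F_gt0).
have := progress_total_drop (leqnn T); rewrite progress0.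
have := progressT; have := adv_rel_size_ge n_even.
lra.
Qed.

Lemma query_lower_bound : (4 <= n)%N -> ~~ odd n -> 1 / 576 * n%:R * sqrtn <= T%:R.
Proof.
move=> n_ge4 n_even; have := adversary_bound n_even.
have n_ge4R : 4 <= n%:R :> RR by rewrite (ler_nat RR 4).
have n_sqr : n%:R = sqrtn ^+ 2 by rewrite sqr_sqrtr ?ler0n.
rewrite natrB ?leq_pmulr ?half_gt0 1?(leq_trans _ n_ge4) // natrM natr_half //.
have r_gt0 := sqrtn_gt0; set r := sqrtn in r_gt0 n_sqr *.
rewrite n_sqr in n_ge4R * => bound.
have := mulr_ge0 (sqr_ge0 r) (_ : 0 <= r ^+ 2 - 4).
rewrite subr_ge0 => /(_ n_ge4R) quartic.
rewrite !expr2 in quartic bound; rewrite -(ler_pM2l r_gt0); lra.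
Qed.

End Adversary.

Theorem lemma11 :
  exists c : RR, 0 < c /\
  exists N0 : nat,
  forall n : nat, ~~ odd n -> (N0 <= n)%N ->
  forall (m T : nat) (U : nat -> op (basis n m)) (psi0 : state (basis n m))
         (out : basis n m -> {ffun 'I_n -> bool}),
    (forall k, (k <= T)%N -> unitary (U k)) ->
    normalized psi0 ->
    (forall s : 'S_n, fpf_involution s ->
       2%:R / 3%:R <= success_prob T U psi0 out s) ->
    c * n%:R * Num.sqrt (n%:R) <= T%:R.
Proof.
exists (1 / 576); split; first lra.
exists 4%N => n n_even n_ge4 m T U psi0 out U_unitary psi0_normalized success.
have n_gt0 : (0 < n)%N by apply: leq_trans n_ge4.
exact: query_lower_bound U_unitary psi0_normalized n_gt0 success n_ge4 n_even.
Qed.
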